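(* Let $X$ be a strongly connected finite digraph with $\delta(X)=0$. Then $\#\mathcal{R}(X)=|m(X)|$, where $\mathcal{R}(X)=\mathcal{BF}_X(\mathbb{Z}V_X)/\mathcal{BF}_X(\mathcal{L}(X))$ and $m(X)=g_X^*(1)/\#\mathrm{BF}(X)_{\rm tors}$.
   Context: Digraph $X=(V_X,E_X)$ with incidence $e\mapsto(o(e),t(e))$; strongly connected means a directed path exists between any two distinct vertices. For finite $X$: $\mathcal{A}_X(v)=\sum_{o(e)=v}t(e)$ on $\mathbb{Z}V_X$, $\mathcal{BF}_X=\mathcal{I}-\mathcal{A}_X$, $\mathrm{BF}(X)=\mathrm{coker}\,\mathcal{BF}_X$, $g_X(u)=\det(\mathcal{I}-\mathcal{A}_Xu)\in\mathbb{Z}[u]$, $r_X=\mathrm{ord}_{u=1}g_X$, $g_X^*(1)$ the coefficient of $(u-1)^{r_X}$ in the Taylor expansion of $g_X$ at $1$, $\delta(X)=r_X-\mathrm{rank}_{\mathbb{Z}}\mathrm{BF}(X)$. When $\delta(X)=0$, $g_X^*(1)$ is a nonzero integer multiple of $\#\mathrm{BF}(X)_{\rm tors}$, and $m(X)$ denotes this integer. $\mathcal{L}(X)=\mathbb{Z}V_X\cap\mathrm{Im}(\mathcal{BF}_{\mathbb{Q}})$ inside $\mathbb{Q}V_X$, where $\mathcal{BF}_{\mathbb{Q}}$ is the extension of $\mathcal{BF}_X$ to $\mathbb{Q}V_X$. *)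

From HB Require Import structures.
From mathcomp Require Import all_boot all_order all_algebra.
Set Implicit Arguments. Unset Strict Implicit. Unset Printing Implicit Defensive.
Import Order.TTheory GRing.Theory Num.Theory.
Local Open Scope ring_scope.

(* A finite digraph X: vertex set 'I_n, edge set 'I_m, incidence e |-> (o e, t e).
   Multiple edges and loops are allowed. *)

Section Digraph.
Variables (n m : nat) (o t : 'I_m -> 'I_n).

Definition edge_rel : rel 'I_n := fun u v => [exists e, (o e == u) && (t e == v)].

Definition strongly_connected : Prop :=
  forall u v : 'I_n, u != v -> connect edge_rel u v.

(* Matrix of A_X acting on row vectors (ZV_X = 'rV[int]_n):
   e_v *m adjA = \sum_{o e = v} e_{t e}. *)
Definition adjA : 'M[int]_n :=
  \matrix_(i, j) (#|[set e | (o e == i) && (t e == j)]|)%:Z.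

Definition BFmx : 'M[int]_n := 1%:M - adjA.

Definition gX : {poly int} := \det (1%:M - 'X *: map_mx polyC adjA).

(* Taylor expansion at u = 1: g(u) = \sum_k c_k (u-1)^k, c_k = coefficient k of g(x+1) *)
Definition taylor1 (p : {poly int}) : {poly int} := p \Po ('X + 1).

Definition rX : nat := find (fun c : int => c != 0) (taylor1 gX).

Definition gstar1 : int := (taylor1 gX)`_rX.

(* rank_Z BF(X) = dim_Q (coker BF_X ⊗ Q) = n - rank_Q BF_X *)
Definition rankBF : nat := (n - \rank (map_mx (intr : int -> rat) BFmx))%N.

Definition deltaX : int := (rX%:Z - rankBF%:Z).

Definition imBF : 'rV[int]_n -> Prop := fun y => exists x, y = x *m BFmx.

Definition latL : 'rV[int]_n -> Prop :=
  fun y => exists x : 'rV[rat]_n,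
              map_mx (intr : int -> rat) y = x *m map_mx (intr : int -> rat) BFmx.

Definition imBF_L : 'rV[int]_n -> Prop :=
  fun y => exists2 x, latL x & y = x *m BFmx.

End Digraph.

(* For subgroups H <= G of 'rV[int]_n: the quotient G/H is finite with exactly k
   elements, witnessed by a complete system of k pairwise incongruent
   representatives of the cosets of H in G. *)
Definition quot_card (n : nat) (G H : 'rV[int]_n -> Prop) (k : nat) : Prop :=
  exists s : 'I_k -> 'rV[int]_n,
    [/\ forall i, G (s i),
        forall i j, H (s i - s j) -> i = j
      & forall g, G g -> exists i, H (g - s i)].

From HB Require Import structures.
From mathcomp Require Import all_boot all_order all_algebra.
Set Implicit Arguments. Unset Strict Implicit. Unset Printing Implicit Defensive.
Import Order.TTheory GRing.Theory Num.Theory.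
Local Open Scope ring_scope.

(* Write B = BF_X in Smith form B = P (Delta E) Q, with P, Q unimodular, E the
   projection onto the first s = rank B coordinates and Delta = diag(d_1, ..., d_s,
   1, ..., 1). In these coordinates L(X) = Z^n E Q, BF_X(Z^n) = Z^n Delta E Q and
   BF_X(L(X)) = Z^n E Q B = Z^n M (Delta E Q) with M = E Q P + (1 - E), so the two
   quotients have |det Delta| and |det M| elements. On the other side
   g_X(1 + x) = det((1 + x) B - x) = (-x)^(n - s) det N(x) with N(0) = Delta M, so
   when g_X vanishes to order exactly n - s = rank BF(X) at 1 its leading Taylor
   coefficient is +-det Delta det M, and |det Delta| = #BF(X)_tors. *)

Lemma mulmx_det_eq0 (R : idomainType) n (v : 'rV[R]_n) (A : 'M[R]_n) :
  \det A != 0 -> v *m A = 0 -> v = 0.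
Proof.
move=> detA vA0; have : \det A *: v == 0.
  by rewrite -mul_mx_scalar -mul_mx_adj mulmxA vA0 mul0mx.
by rewrite scalemx_eq0 (negbTE detA) => /eqP.
Qed.

Lemma map_intr_unitmx n (A : 'M[int]_n) :
  \det A != 0 -> map_mx (intr : int -> rat) A \in unitmx.
Proof. by rewrite unitmxE det_map_mx unitfE intr_eq0. Qed.

Lemma map_intr_mx_inj m n :
  injective (map_mx (intr : int -> rat) : 'M[int]_(m, n) -> 'M[rat]_(m, n)).
Proof.
move=> A B /matrixP eqAB; apply/matrixP => i j.
by have /eqP := eqAB i j; rewrite !mxE eqr_int => /eqP.
Qed.

Lemma unitmx_det_neq0 (R : comUnitRingType) n (A : 'M[R]_n) :
  A \in unitmx -> \det A != 0.
Proof. by rewrite unitmxE; apply: contraTneq => ->; rewrite unitr0. Qed.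

Section Lattices.
Variable n : nat.
Implicit Types (G H : 'rV[int]_n -> Prop) (A B M K P : 'M[int]_n) (v y : 'rV[int]_n).

(* For B = BF_X, [rowlattice B], [saturation B] and [lattice_image (saturation B) B]
   are BF_X(ZV_X), L(X) and BF_X(L(X)). *)
Definition rowlattice B : 'rV[int]_n -> Prop := fun y => exists x, y = x *m B.

Definition saturation B : 'rV[int]_n -> Prop :=
  fun y => exists x : 'rV[rat]_n,
    map_mx (intr : int -> rat) y = x *m map_mx (intr : int -> rat) B.

Definition lattice_image G B : 'rV[int]_n -> Prop := fun y => exists2 x, G x & y = x *m B.

Lemma rowlattice_unitl P A y : P \in unitmx -> rowlattice (P *m A) y <-> rowlattice A y.
Proof.
move=> Punit; split=> [[x ->]|[x ->]]; first by exists (x *m P); rewrite mulmxA.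
by exists (x *m invmx P); rewrite mulmxA mulmxKV.
Qed.

Lemma lattice_image_rowlattice A B y :
  lattice_image (rowlattice A) B y <-> rowlattice (A *m B) y.
Proof.
split=> [[_ [x ->] ->]|[x ->]]; first by exists x; rewrite mulmxA.
by exists (x *m A); [exists x | rewrite mulmxA].
Qed.

Lemma quot_card_fintype (T : finType) G H (s : T -> 'rV[int]_n) :
  (forall i, G (s i)) -> (forall i j, H (s i - s j) -> i = j) ->
  (forall g, G g -> exists i, H (g - s i)) -> quot_card G H #|T|.
Proof.
move=> Gs Hs Cs; exists (fun i => s (enum_val i)); split.
- by move=> i; apply: Gs.
- by move=> i j /Hs /enum_val_inj.
- by move=> g /Cs [i Hi]; exists (enum_rank i); rewrite enum_rankK.
Qed.

Lemma quot_card_ext G G' H H' k :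
  (forall y, G y <-> G' y) -> (forall y, H y <-> H' y) ->
  quot_card G H k -> quot_card G' H' k.
Proof.
move=> GG' HH' [s [Gs Hs Cs]]; exists s; split.
- by move=> i; apply/GG'.
- by move=> i j /HH' /Hs.
- by move=> g /GG' /Cs [i /HH' Hi]; exists i.
Qed.

Lemma quot_card_mulmx M K k :
  quot_card (fun _ => True) (rowlattice M) k ->
  (forall v, v *m K = 0 -> rowlattice M v) ->
  quot_card (rowlattice K) (rowlattice (M *m K)) k.
Proof.
move=> [s [_ Ms Cs]] kerK; exists (fun i => s i *m K); split.
- by move=> i; exists (s i).
- move=> i j [v e]; apply: Ms.
  have [x ex] : rowlattice M (s i - s j - v *m M).
    by apply: kerK; rewrite !mulmxBl e mulmxA subrr.
  by exists (x + v); rewrite mulmxDl -ex subrK.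
- move=> _ [v ->]; have [i [x ex]] := Cs v I.
  by exists i; exists x; rewrite -mulmxBl ex mulmxA.
Qed.

Lemma quot_card_diag (d : 'rV[int]_n) : (forall i, d 0 i != 0) ->
  quot_card (fun _ => True) (rowlattice (diag_mx d)) (\prod_i `|d 0%R i|).
Proof.
move=> d_neq0; pose T := {dffun forall i : 'I_n, 'I_(`|d 0%R i|)}.
have -> : (\prod_i `|d 0%R i|)%N = #|T|.
  rewrite card_dep_ffun foldrE big_map big_enum.
  by apply: eq_bigr => i _; rewrite card_ord.
apply: (@quot_card_fintype T _ _ (fun f => \row_j (f j : nat)%:Z)) => //.
- move=> f g [x]; rewrite mul_mx_diag => /matrixP e.
  apply/ffunP => j; apply/val_inj; have := e 0 j; rewrite !mxE => ej.
  have : (`|d 0%R j|%:Z %| (f j)%:Z - (g j)%:Z)%Z by rewrite ej dvdzE abszM dvdn_mull.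
  by rewrite -eqz_mod_dvd !modz_nat !modn_small // => /eqP [].
- move=> v _.
  have mod_lt j : (`|(v 0%R j %% d 0%R j)%Z| < `|d 0%R j|)%N.
    by rewrite -ltz_nat !abszE ger0_norm ?modz_ge0 ?ltz_mod.
  exists [ffun j => Ordinal (mod_lt j)].
  exists (\row_j (v 0%R j %/ d 0%R j)%Z); rewrite mul_mx_diag; apply/matrixP => i j.
  rewrite (ord1 i) !mxE ffunE /= abszE ger0_norm ?modz_ge0 //.
  by rewrite {1}(divz_eq (v 0 j) (d 0 j)) addrK.
Qed.

Lemma absz_det_unitmx A : A \in unitmx -> `|\det A|%N = 1%N.
Proof. by rewrite unitmxE => /orP[] /eqP ->. Qed.

Lemma quot_card_det M : \det M != 0 ->
  quot_card (fun _ => True) (rowlattice M) `|\det M|.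
Proof.
move=> detM; have [L Lunit [R Runit [d _ defM]]] := int_Smith_normal_form M.
pose dr : 'rV[int]_n := \row_i d`_i.
have defD : \matrix_(i, j) (d`_i *+ (i == j :> nat)) = diag_mx dr.
  by apply/matrixP => i j; rewrite !mxE.
rewrite defD in defM.
have detD : \det M = \det L * \prod_i dr 0%R i * \det R.
  by rewrite defM !det_mulmx det_diag.
have dr_neq0 i : dr 0%R i != 0.
  by apply: contraNneq detM; rewrite detD (bigD1 i) //= => ->; rewrite !(mul0r, mulr0).
have -> : `|\det M|%N = (\prod_i `|dr 0%R i|)%N.
  by rewrite detD !abszM !absz_det_unitmx // mul1n muln1 (big_morph absz abszM absz1).
apply: (quot_card_ext _ _ (quot_card_mulmx (quot_card_diag dr_neq0) (K := R) _)).
- by move=> y; split=> // _; exists (y *m invmx R); rewrite mulmxKV.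
- by move=> y; rewrite defM -mulmxA; apply: iff_sym; apply: rowlattice_unitl.
- move=> v vR0; exists 0; rewrite mul0mx; apply: mulmx_det_eq0 vR0.
  by rewrite -absz_eq0 absz_det_unitmx.
Qed.

End Lattices.

Lemma det_pid_sub_copid (R : comPzRingType) n s (x : R) : (s <= n)%N ->
  \det (pid_mx s - x *: copid_mx s : 'M[R]_n) = (- x) ^+ (n - s).
Proof.
move=> le_sn.
have -> : pid_mx s - x *: copid_mx s = diag_mx (\row_(i < n) if (i < s)%N then 1 else - x).
  apply/matrixP => i j; rewrite !mxE val_eqE.
  by case: (i < s)%N; case: (i == j);
    rewrite /= ?(mulr0, mulr1, subr0, sub0r, subrr, oppr0, addr0).
rewrite det_diag; under eq_bigr do rewrite mxE.
rewrite -(big_mkord xpredT (fun i => if (i < s)%N then 1 else - x)).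
rewrite (big_cat_nat (leq0n s) le_sn) /= big_nat_cond big1 ?mul1r; last first.
  by move=> i /andP[/andP[_ ->]].
rewrite big_nat_cond (eq_bigr (fun _ => - x)) -?big_nat_cond ?prodr_const_nat //.
by move=> i /andP[/andP[/leq_gtF ->]].
Qed.

Lemma coef_find_neq0 (R : nzRingType) (p : {poly R}) :
  p != 0 -> p`_(find (fun c => c != 0) p) != 0.
Proof.
move=> p_neq0; suff /(nth_find 0) : has (fun c => c != 0) p by [].
apply/hasP; exists (lead_coef p); last by rewrite lead_coef_eq0.
by rewrite lead_coefE mem_nth // prednK ?size_poly_gt0 ?ltnSn.
Qed.

Lemma coef_exprNX_mul (R : nzRingType) k (p : {poly R}) :
  ((- 'X) ^+ k * p)`_k = (-1) ^+ k * p`_0.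
Proof.
by rewrite [(- 'X) ^+ _]exprNn -mulrA -(rmorph_sign (@polyC R)) coefCM coefXnM ltnn subnn.
Qed.

Lemma absz_divz_absl (a b : int) : a != 0 -> `|((a * b) %/ `|a|%:Z)%Z|%N = `|b|%N.
Proof.
move=> a_neq0; rewrite {1}[a]intEsg mulrAC mulzK ?eqz_nat ?absz_eq0 //.
by rewrite abszM; move: a_neq0; case: sgzP => // _ _; rewrite mul1n.
Qed.

Lemma det_pencil_pidl (R : comPzRingType) n s (x : R) (A : 'M[R]_n) :
  (s <= n)%N -> pid_mx s *m A = A ->
  \det ((x + 1) *: A - x%:M) =
  (- x) ^+ (n - s) * \det ((x + 1) *: A - x *: pid_mx s + copid_mx s).
Proof.
move=> le_sn pidA; rewrite -det_pid_sub_copid // -det_mulmx; congr (\det _).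
have copidA : copid_mx s *m A = 0 by rewrite -pidA mulmxA mul_copid_mx_pid ?mul0mx.
rewrite mulmxDr mulmxBr !mulmxBl -!scalemxAl -!scalemxAr pidA copidA.
rewrite pid_mx_id // mul_pid_mx_copid // mul_copid_mx_pid // copid_mx_id //.
rewrite !(scaler0, subr0, sub0r, addr0) -addrA -opprD -scalerDr.
by rewrite /copid_mx addrCA subrr addr0 scalemx1.
Qed.

Lemma det_pencil_mulmxC (R : comUnitRingType) n (a b : R) (P A : 'M[R]_n) :
  P \in unitmx -> \det (a *: (P *m A) - b%:M) = \det (a *: (A *m P) - b%:M).
Proof.
move=> Punit.
have -> : a *: (P *m A) - b%:M = P *m (a *: (A *m P) - b%:M) *m invmx P.
  rewrite mulmxBr mulmxBl -scalemxAr -scalemxAl mul_mx_scalar -scalemxAl.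
  by rewrite mulmxA mulmxK // mulmxV // scalemx1.
by rewrite !det_mulmx det_inv mulrC mulrA mulVr ?mul1r // -unitmxE.
Qed.

Lemma det_pencil_comp_X1 (R : comNzRingType) n (B : 'M[R]_n) :
  \det (1%:M - 'X *: map_mx polyC (1%:M - B)) \Po ('X + 1) =
  \det (('X + 1) *: map_mx polyC B - 'X%:M).
Proof.
rewrite -det_map_mx map_mxB map_mx1 map_mxZ /= comp_polyX.
have -> : map_mx (comp_poly ('X + 1)) (map_mx polyC (1%:M - B)) = map_mx polyC (1%:M - B).
  by apply/matrixP => i j; rewrite !mxE comp_polyC.
rewrite map_mxB map_mx1 scalerBr scalemx1 opprB raddfD /= addrA addrC.
by rewrite opprD -addrA addKr addrC.
Qed.

Lemma det_pencil_comp_X1_neq0 (R : comNzRingType) n (A : 'M[R]_n) :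
  \det (1%:M - 'X *: map_mx polyC A) \Po ('X + 1) != 0.
Proof.
apply: contra_neq (@oner_neq0 R) => /(congr1 (horner^~ (-1))).
rewrite horner_comp !hornerE addNr -horner_evalE -det_map_mx map_mxB map_mx1 map_mxZ /=.
by rewrite horner_evalE hornerX scale0r subr0 det1.
Qed.

Section SmithForm.
Variables (n s : nat) (P Q Delta : 'M[int]_n).
Hypotheses (le_sn : (s <= n)%N) (P_unit : P \in unitmx) (Q_unit : Q \in unitmx).
Hypotheses (det_Delta : \det Delta != 0)
  (pid_DeltaC : pid_mx s *m Delta = Delta *m pid_mx s)
  (Delta_copid : Delta *m copid_mx s = copid_mx s).

Local Notation E := (pid_mx s : 'M[int]_n).
Local Notation F := (copid_mx s : 'M[int]_n).
Local Notation D := (Delta *m E).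
Local Notation B := (P *m D *m Q).
Local Notation M := (E *m (Q *m P) + F).
Local Notation ratmx := (map_mx (intr : int -> rat)).

Lemma copid_Delta : F *m Delta = F.
Proof.
by rewrite mulmxBl mul1mx pid_DeltaC -{1}[Delta]mulmx1 -mulmxBr.
Qed.

Lemma pid_D : E *m D = D.
Proof. by rewrite mulmxA pid_DeltaC -mulmxA pid_mx_id. Qed.

Lemma copid_D : F *m D = 0.
Proof. by rewrite mulmxA copid_Delta mul_copid_mx_pid. Qed.

Lemma mulmx_copid (v : 'rV[int]_n) : v *m E = 0 -> v *m F = v.
Proof. by move=> vE0; rewrite mulmxBr mulmx1 vE0 subr0. Qed.

Lemma mulmx_pid (v : 'rV[int]_n) : v *m F = 0 -> v *m E = v.
Proof. by move/eqP; rewrite mulmxBr mulmx1 subr_eq0 => /eqP. Qed.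

Lemma ratmx_unit (A : 'M[int]_n) : A \in unitmx -> ratmx A \in unitmx.
Proof. by move/unitmx_det_neq0/map_intr_unitmx. Qed.

Lemma rank_B : \rank (ratmx B) = s.
Proof.
rewrite !map_mxM mxrankMfree ?row_free_unit ?ratmx_unit //.
rewrite eqmxMfull ?row_full_unit ?ratmx_unit // eqmxMfull ?row_full_unit ?map_intr_unitmx //.
by rewrite map_pid_mx rank_pid_mx.
Qed.

Lemma rowlattice_B y : rowlattice B y <-> rowlattice (Delta *m (E *m Q)) y.
Proof. by rewrite -!mulmxA; apply: rowlattice_unitl. Qed.

Lemma saturation_B y : saturation B y <-> rowlattice (E *m Q) y.
Proof.
split=> [[x yB]|[v ->]].
  pose w := y *m invmx Q.
  have wE : ratmx w = x *m ratmx (P *m D).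
    by rewrite map_mxM yB -mulmxA -map_mxM mulmxK.
  have wF0 : w *m F = 0.
    apply: map_intr_mx_inj; rewrite map_mxM wE map_mx0 -mulmxA -map_mxM.
    by rewrite -!mulmxA mul_pid_mx_copid // !mulmx0 map_mx0 mulmx0.
  by exists w; rewrite mulmxA (mulmx_pid wF0) mulmxKV.
exists (ratmx (v *m E) *m invmx (ratmx Delta) *m invmx (ratmx P)).
rewrite !map_mxM !mulmxA (mulmxKV (ratmx_unit P_unit)).
by rewrite (mulmxKV (map_intr_unitmx det_Delta)) -!map_mxM -(mulmxA v E E) pid_mx_id.
Qed.

Lemma image_saturation_B y :
  lattice_image (saturation B) B y <-> rowlattice (M *m (D *m Q)) y.
Proof.
have -> : M *m (D *m Q) = E *m Q *m B.
  by rewrite mulmxDl (mulmxA F) copid_D mul0mx addr0 -!mulmxA.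
apply: iff_trans (lattice_image_rowlattice _ _ _).
by split=> [[x /saturation_B Ex ->]|[x /saturation_B Ex ->]]; exists x.
Qed.

Lemma quot_card_saturation : quot_card (saturation B) (rowlattice B) `|\det Delta|.
Proof.
apply: (quot_card_ext _ _ (quot_card_mulmx (quot_card_det det_Delta) (K := E *m Q) _)).
- by move=> y; apply: iff_sym; apply: saturation_B.
- by move=> y; apply: iff_sym; apply: rowlattice_B.
- move=> v; rewrite mulmxA => /(mulmx_det_eq0 (unitmx_det_neq0 Q_unit)) vE0.
  by exists (v *m F); rewrite -mulmxA copid_Delta mulmx_copid.
Qed.

Lemma quot_card_image_saturation : \det M != 0 ->
  quot_card (rowlattice B) (lattice_image (saturation B) B) `|\det M|.
Proof.
move=> det_M.
apply: (quot_card_ext _ _ (quot_card_mulmx (quot_card_det det_M) (K := D *m Q) _)).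
- by move=> y; rewrite -mulmxA; apply: iff_sym; apply: rowlattice_B.
- by move=> y; apply: iff_sym; apply: image_saturation_B.
- move=> v; rewrite mulmxA => /(mulmx_det_eq0 (unitmx_det_neq0 Q_unit)).
  rewrite -pid_DeltaC mulmxA => /(mulmx_det_eq0 det_Delta) vE0.
  exists (v *m F); rewrite -mulmxA mulmxDr mulmxA mul_copid_mx_pid // mul0mx add0r.
  by rewrite copid_mx_id // mulmx_copid.
Qed.

Local Notation T := (\det (1%:M - 'X *: map_mx polyC (1%:M - B)) \Po ('X + 1)).
Local Notation N := (('X + 1) *: map_mx polyC (D *m (Q *m P)) - 'X *: pid_mx s + copid_mx s).

Lemma comp_det_pencil_B : T = (- 'X) ^+ (n - s) * \det N.
Proof.
have polyC_unit : map_mx (@polyC int) P \in unitmx.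
  by rewrite unitmxE det_map_mx rmorph_unit // -unitmxE.
rewrite det_pencil_comp_X1 -mulmxA map_mxM det_pencil_mulmxC // -map_mxM.
rewrite -(mulmxA D Q P) (det_pencil_pidl _ le_sn) //.
by rewrite -(map_pid_mx polyC) -map_mxM (mulmxA E) pid_D.
Qed.

Lemma coef0_det_N : (\det N)`_0 = \det Delta * \det M.
Proof.
rewrite -horner_coef0 -horner_evalE -det_map_mx -det_mulmx; congr (\det _).
have evalC (A : 'M[int]_n) : map_mx (horner_eval 0) (map_mx polyC A) = A.
  by apply/matrixP => i j; rewrite !mxE /horner_eval hornerC.
rewrite !(map_mxD, map_mxN, map_mxZ, map_mx1, map_pid_mx) /= evalC.
rewrite /horner_eval hornerD hornerX hornerC add0r scale1r scale0r subr0.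
by rewrite mulmxDr Delta_copid !mulmxA.
Qed.

Lemma quot_cards_Smith_form : find (fun c : int => c != 0) T = (n - s)%N ->
  exists tors : nat,
    [/\ quot_card (saturation B) (rowlattice B) tors,
        (tors%:Z %| T`_(n - s))%Z
      & quot_card (rowlattice B) (lattice_image (saturation B) B)
          `|(T`_(n - s) %/ tors%:Z)%Z|%N].
Proof.
move=> find_T.
have coefT : T`_(n - s) = \det Delta * ((-1) ^+ (n - s) * \det M).
  by rewrite comp_det_pencil_B coef_exprNX_mul coef0_det_N mulrCA.
have det_M : \det M != 0.
  have := coef_find_neq0 (det_pencil_comp_X1_neq0 (1%:M - B)).
  by rewrite find_T coefT; apply: contraNneq => ->; rewrite !mulr0.
exists `|\det Delta|%N; split.
- exact: quot_card_saturation.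
- by rewrite coefT dvdzE abszM dvdn_mulr.
- by rewrite coefT absz_divz_absl // abszMsign; apply: quot_card_image_saturation.
Qed.

End SmithForm.

Section PaddedDiagonal.
Variables (n s : nat) (d : 'I_n -> int).

Definition pad_diag : 'M[int]_n := diag_mx (\row_i if (i < s)%N then d i else 1).

Lemma pid_pad_diagC : pid_mx s *m pad_diag = pad_diag *m pid_mx s.
Proof.
apply/matrixP => i j; rewrite mul_mx_diag mul_diag_mx !mxE.
have [->|/negbTE ne] := eqVneq i j; first by rewrite mulrC.
by rewrite (val_eqE i j) ne mul0r mulr0.
Qed.

Lemma pad_diag_copid : pad_diag *m copid_mx s = copid_mx s.
Proof.
apply/matrixP => i j; rewrite mul_diag_mx !mxE.
by case: ltnP => _; rewrite ?andbF ?andbT ?subrr ?mulr0 ?subr0 ?mul1r.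
Qed.

Lemma det_pad_diag : (forall i : 'I_n, (i < s)%N -> d i != 0) -> \det pad_diag != 0.
Proof.
move=> d_neq0; rewrite det_diag; apply/prodf_neq0 => i _; rewrite mxE.
by case: ifP => [/d_neq0|].
Qed.

End PaddedDiagonal.

Lemma sorted_dvdz_nth_eq0 (d : seq int) i :
  sorted dvdz d -> (find (fun x : int => x == 0) d <= i)%N -> d`_i = 0.
Proof.
move=> d_sorted le_fi; have [lt_i_d|] := ltnP i (size d); last exact: nth_default.
have has0 : has (fun x : int => x == 0) d by rewrite has_find (leq_ltn_trans le_fi).
have /eqP d_f0 := nth_find 0 has0.
move: le_fi; rewrite leq_eqVlt => /predU1P[<- //|lt_fi].
apply/eqP; rewrite -dvd0z -[X in (X %| _)%Z]d_f0.
by apply: (sorted_ltn_nth dvdz_trans 0 d_sorted); rewrite ?inE -?has_find.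
Qed.

Lemma int_Smith_pid n (B : 'M[int]_n) :
  exists s (P Q : 'M[int]_n) (d : 'I_n -> int),
    [/\ (s <= n)%N, P \in unitmx, Q \in unitmx,
        forall i : 'I_n, (i < s)%N -> d i != 0
      & B = P *m (pad_diag s d *m pid_mx s) *m Q].
Proof.
have [P P_unit [Q Q_unit [d d_sorted ->]]] := int_Smith_normal_form B.
pose s := minn (find (fun x : int => x == 0) d) n.
have lt_s i : ((i : 'I_n) < s)%N = (i < find (fun x : int => x == 0) d)%N.
  by rewrite leq_min ltn_ord andbT.
exists s, P, Q, (fun i => d`_i); split => //; first exact: geq_minr.
  by move=> i; rewrite lt_s => /(before_find 0) /negbT.
congr (_ *m _ *m _); apply/matrixP => i j; rewrite mul_diag_mx !mxE lt_s.
case: ltnP => [_|le_fi]; first by rewrite andbT mulr_natr.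
by rewrite andbF mulr0 (sorted_dvdz_nth_eq0 d_sorted le_fi) mul0rn.
Qed.

Lemma quot_cards_int_mx n (B : 'M[int]_n) :
  let T := \det (1%:M - 'X *: map_mx polyC (1%:M - B)) \Po ('X + 1) in
  let r := (n - \rank (map_mx (intr : int -> rat) B))%N in
  find (fun c : int => c != 0) T = r ->
  exists tors : nat,
    [/\ quot_card (saturation B) (rowlattice B) tors,
        (tors%:Z %| T`_r)%Z
      & quot_card (rowlattice B) (lattice_image (saturation B) B) `|(T`_r %/ tors%:Z)%Z|%N].
Proof.
have [s [P [Q [d [le_sn P_unit Q_unit d_neq0 ->]]]]] := int_Smith_pid B.
have det_Delta := det_pad_diag d_neq0.
rewrite /= (rank_B le_sn P_unit Q_unit det_Delta).
exact: quot_cards_Smith_form le_sn P_unit Q_unit det_Delta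
  (pid_pad_diagC s d) (pad_diag_copid s d).
Qed.

Unset Implicit Arguments.

Theorem theorem2p11 (n m : nat) (o t : 'I_m -> 'I_n) :
  strongly_connected o t ->
  deltaX o t = 0 ->
  exists tors : nat,
    [/\ quot_card (latL o t) (imBF o t) tors,
        (tors%:Z %| gstar1 o t)%Z
      & quot_card (imBF o t) (imBF_L o t) `|(gstar1 o t %/ tors%:Z)%Z|%N].
Proof.
move=> _ /eqP; rewrite subr_eq0 eqz_nat => /eqP rX_rank.
have adjA_BF : adjA o t = 1%:M - BFmx o t by rewrite subKr.
move: (rX_rank); rewrite /rX /taylor1 /gX adjA_BF => find_r.
rewrite /gstar1 rX_rank /taylor1 /gX adjA_BF.
exact: quot_cards_int_mx find_r.
Qed.
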